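(* Let $M$ be a finite monoid and $e,f\in E(M)$, and let $X=MeM$, $Y=MfM$. Then $\mathrm{AIrr}_{\mathscr K(M)}(e,f)=fMe\setminus\nabla Y\nabla X$ and $\mathrm{Irr}_{\mathscr K(M)}(e,f)=\mathrm{Null}(\mathrm{AIrr}_{\mathscr K(M)}(e,f))$. In particular, both are $G_f\times G_e^{op}$-invariant subsets of $fMe$.
   Context: $E(M)$ is the set of idempotents. For a principal ideal $X$, $\nabla X=\{m\in M: X\not\subseteq MmM\}$, and $\nabla Y\nabla X=\{ab:a\in\nabla Y,b\in\nabla X\}$. The Karoubi envelope $\mathscr K(M)$ has objects $E(M)$, morphisms $e\to f$ the elements of $fMe$, composition the product of $M$. A morphism $m\colon e\to f$ is almost irreducible if whenever $m=gh$ in $\mathscr K(M)$, either $h$ is a split monomorphism or $g$ a split epimorphism; it is irreducible if moreover it is neither a split monomorphism nor a split epimorphism. $\mathrm{AIrr}_{\mathscr K(M)}(e,f)$, $\mathrm{Irr}_{\mathscr K(M)}(e,f)$ are the sets of such morphisms. $m$ is null if $m\notin mMm$; $\mathrm{Null}(A)$ is the set of null elements of $A$. $G_e$ is the group of units of $eMe$; $G_f\times G_e^{op}$-invariant means closed under left multiplication by $G_f$ and right multiplication by $G_e$. *)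

(* A finite monoid is given by a finType carrier together
   with an associative multiplication and a two-sided unit (explicit axioms
   appear as binders in the main theorem). *)
From mathcomp Require Import all_boot.
Set Implicit Arguments. Unset Strict Implicit. Unset Printing Implicit Defensive.

Section FinMonoidDefs.
Variables (T : finType) (mul : T -> T -> T).

Definition idem (e : T) : Prop := mul e e = e.

Definition pideal (x : T) : T -> Prop := fun y => exists a b, y = mul a (mul x b).

Definition nabla (X : T -> Prop) : T -> Prop :=
  fun m => ~ (forall y, X y -> pideal m y).

Definition setmul (A B : T -> Prop) : T -> Prop :=
  fun x => exists a b, A a /\ B b /\ x = mul a b.

(* f M e : the hom-set e -> f in the Karoubi envelope *)
Definition hom (e f : T) : T -> Prop := fun x => exists a, x = mul f (mul a e).

(* h : e -> k is a split monomorphism in K(M): r h = 1_e = e for some r : k -> e *)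
Definition split_mono (e k h : T) : Prop := exists r, hom k e r /\ mul r h = e.
Definition split_epi (k f g : T) : Prop := exists s, hom f k s /\ mul g s = f.

Definition AIrr (e f : T) : T -> Prop := fun m =>
  hom e f m /\
  forall k g h, idem k -> hom k f g -> hom e k h -> m = mul g h ->
    split_mono e k h \/ split_epi k f g.

Definition Irr (e f : T) : T -> Prop := fun m =>
  AIrr e f m /\ ~ split_mono e f m /\ ~ split_epi e f m.

Definition null (m : T) : Prop := ~ (exists a, m = mul m (mul a m)).
Definition Null (A : T -> Prop) : T -> Prop := fun m => A m /\ null m.

Definition unitgrp (e : T) : T -> Prop := fun u =>
  hom e e u /\ exists v, hom e e v /\ mul u v = e /\ mul v u = e.

Definition biinvariant (e f : T) (A : T -> Prop) : Prop :=
  forall u v x, unitgrp f u -> unitgrp e v -> A x -> A (mul u (mul x v)).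

End FinMonoidDefs.

(* A morphism m : e -> f of the Karoubi envelope factors through the unit
   object as m = (f a)(b e) whenever m = a b, and such a factorisation is
   split on one side exactly when e lies in M b M or f in M a M; this gives
   the inclusion of AIrr in the complement of nabla Y nabla X.  Conversely,
   finiteness makes the monoid stable: if e lies in M h M and h lies in M e
   then e already lies in M h, so a factorisation m = g h through which no
   side is split forces g in nabla Y and h in nabla X.  Irreducibility adds
   that m is neither split mono nor split epi, and a factorisation
   m = m (a m) exhibits exactly the regular elements as the obstruction.
   Invariance under units holds because each nabla is a two-sided ideal. *)
From Stdlib Require Import Classical.
From mathcomp Require Import all_boot.
Set Implicit Arguments. Unset Strict Implicit. Unset Printing Implicit Defensive.

Section FiniteMonoidStability.
Variables (T : finType) (mul : T -> T -> T) (one : T).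
Hypotheses (mulA : associative mul) (mul1m : left_id one mul) (mulm1 : right_id one mul).
Local Infix "**" := mul (at level 40, left associativity).

Definition mpow w n := iter n (mul w) one.

Lemma iter_mulE w n y : iter n (mul w) y = mpow w n ** y.
Proof.
elim: n => [|n IHn] /=; first by rewrite /mpow /= mul1m.
by rewrite IHn /mpow /= mulA.
Qed.

Lemma mpowD w a b : mpow w (a + b) = mpow w a ** mpow w b.
Proof. by rewrite {1}/mpow iterD iter_mulE. Qed.

Lemma mpow1 w : mpow w 1 = w.
Proof. by rewrite /mpow /= mulm1. Qed.

Lemma mpowSr w n : mpow w n.+1 = mpow w n ** w.
Proof. by rewrite -addn1 mpowD mpow1. Qed.

Lemma mpow_sandwich e w v n : e = w ** e ** v -> e = mpow w n ** e ** mpow v n.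
Proof.
move=> E; elim: n => [|n IHn]; first by rewrite /mpow /= mul1m mulm1.
have -> : mpow w n.+1 = w ** mpow w n by [].
by rewrite mpowSr -(mulA w) mulA -(mulA w) -IHn -E.
Qed.

Lemma mpow_repeat w : exists i j, (i < j)%N /\ mpow w i = mpow w j.
Proof.
pose F (i : 'I_#|T|.+1) := mpow w i.
have /injectivePn [x [y neq_xy Fxy]] : ~~ injectiveb F.
  by apply/injectiveP => /leq_card; rewrite card_ord ltnn.
case: (ltngtP x y) => [lt_xy|lt_yx|/val_inj eq_xy].
- by exists x, y.
- by exists y, x.
- by rewrite eq_xy eqxx in neq_xy.
Qed.

(* The power (u h)^(j - i) fixes e on the left, and it ends with h. *)
Lemma finite_stable_left e h u v :
  e = u ** (h ** v) -> h = h ** e -> exists r, e = r ** h.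
Proof.
move=> euhv hhe.
have E : e = (u ** h) ** e ** v by rewrite -(mulA u h e) -hhe -mulA.
have [i [j [lt_ij Eij]]] := mpow_repeat (u ** h).
have fix_e : mpow (u ** h) (j - i) ** e = e.
  rewrite {1}(mpow_sandwich i E) !mulA -mpowD subnK ?(ltnW lt_ij) //.
  by rewrite -Eij -(mpow_sandwich i E).
move: fix_e; case: (j - i)%N (subn_gt0 i j) => [|d]; first by rewrite lt_ij.
move=> _ fix_e; exists (mpow (u ** h) d ** u).
by rewrite -{1}fix_e mpowSr -!mulA -hhe.
Qed.

End FiniteMonoidStability.

Lemma finite_stable_right (T : finType) (mul : T -> T -> T) (one : T) :
  associative mul -> left_id one mul -> right_id one mul ->
  forall e h u v, e = mul u (mul h v) -> h = mul e h -> exists r, e = mul h r.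
Proof.
move=> mulA mul1m mulm1 e h u v euhv hhe.
have mulA_op : associative (fun x y => mul y x) by move=> x y z; rewrite mulA.
by apply: (finite_stable_left mulA_op mulm1 mul1m (u := v) (v := u)) => //=; rewrite -mulA.
Qed.

Section KaroubiIrreducible.
Variables (T : finType) (mul : T -> T -> T) (one : T).
Hypotheses (mulA : associative mul) (mul1m : left_id one mul) (mulm1 : right_id one mul).
Local Infix "**" := mul (at level 40, left associativity).

Lemma homP a b x : idem mul a -> idem mul b ->
  hom mul a b x <-> b ** x = x /\ x ** a = x.
Proof.
move=> ha hb; split; last by case=> bx xa; exists x; rewrite xa bx.
case=> c ->; split; first by rewrite mulA hb.
by rewrite -!mulA ha.
Qed.

Lemma idem_one : idem mul one.
Proof. by rewrite /idem mul1m. Qed.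

Lemma nabla_pidealP a m : nabla mul (pideal mul a) m <-> ~ pideal mul m a.
Proof.
split=> [nm [c [d acmd]] | Na Hsub]; last by apply/Na/Hsub; exists one, one; rewrite mul1m mulm1.
apply: nm => y [p [q ->]].
by exists (p ** c), (d ** q); rewrite acmd !mulA.
Qed.

Lemma nabla_pideal_mul a x y z :
  nabla mul (pideal mul a) x -> nabla mul (pideal mul a) (y ** x ** z).
Proof.
move=> /nabla_pidealP Nx; apply/nabla_pidealP => [[c [d E]]]; apply: Nx.
by exists (c ** y), (z ** d); rewrite E !mulA.
Qed.

Lemma unitgrpP g u : idem mul g -> unitgrp mul g u ->
  exists u', [/\ g ** u = u, u ** g = u, u' ** u = g & u ** u' = g].
Proof.
move=> hg [Hu [u' [_ [uu' u'u]]]].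
by have [gu ug] := (homP _ hg hg).1 Hu; exists u'.
Qed.

Variables (e f : T) (he : idem mul e) (hf : idem mul f).

Lemma AIrrP m : AIrr mul e f m <->
  hom mul e f m /\ ~ setmul mul (nabla mul (pideal mul f)) (nabla mul (pideal mul e)) m.
Proof.
split.
  case=> Hm irr_m; split=> // [[a [b [/nabla_pidealP Na [/nabla_pidealP Nb mab]]]]].
  have [fm me] := (homP _ he hf).1 Hm.
  have m_one : m = (f ** a) ** (b ** e) by rewrite -fm -me mab !mulA.
  case: (irr_m one (f ** a) (b ** e) idem_one) => //.
  - by apply/(homP _ idem_one hf); rewrite mulA hf mulm1.
  - by apply/(homP _ he idem_one); rewrite mul1m -mulA he.
  - by case=> r [_ rbe]; apply: Nb; exists r, e; rewrite rbe.
  - by case=> s [_ fas]; apply: Na; exists f, s; rewrite mulA fas.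
case=> Hm Nm; split=> // k g h hk Hg Hh mgh.
have [kh he_h] := (homP _ he hk).1 Hh.
have [fg gk] := (homP _ hk hf).1 Hg.
have [[a [b eahb]] | Nh] := classic (pideal mul h e).
  have [r erh] := finite_stable_left mulA mul1m mulm1 eahb (esym he_h).
  left; exists (e ** r ** k); split.
    by apply/(homP _ hk he); rewrite ?mulA ?he // -!mulA hk.
  by rewrite -mulA kh -mulA -erh he.
have [[a [b fagb]] | Ng] := classic (pideal mul g f).
  have [r fgr] := finite_stable_right mulA mul1m mulm1 fagb (esym fg).
  right; exists (k ** r ** f); split.
    by apply/(homP _ hf hk); rewrite ?mulA ?hk // -!mulA hf.
  by rewrite !mulA gk -fgr hf.
by case: Nm; exists g, h; split; [exact/nabla_pidealP | split; first exact/nabla_pidealP].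
Qed.

(* A regular m = m a m factors as m (e a m) through e, and neither factor
   can split without m itself splitting. *)
Lemma Irr_NullP m : Irr mul e f m <-> Null mul (AIrr mul e f) m.
Proof.
split; case=> HA; last first.
  have [fm me] := (homP _ he hf).1 HA.1.
  move=> Nm; split=> //; split.
    by case=> r [_ rme]; apply: Nm; exists r; rewrite rme me.
  by case=> s [_ mse]; apply: Nm; exists s; rewrite mulA mse fm.
case=> Nmono Nepi; split=> // [[a mam]].
have [fm me] := (homP _ he hf).1 HA.1.
pose h := e ** a ** m.
have Hh : hom mul e e h.
  by apply/(homP _ he he); rewrite /h !mulA he -(mulA _ m) me.
case: (HA.2 e m h he HA.1 Hh) => //.
  by rewrite /h !mulA me -mulA -mam.
case=> r [Hr rh]; apply: Nmono.
have [er _] := (homP _ he he).1 Hr.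
exists (r ** e ** a ** f); split.
  by apply/(homP _ hf he); rewrite !mulA er -(mulA _ f) hf.
by move: rh; rewrite /h -(mulA _ f) fm !mulA.
Qed.

Lemma unit_conj_cancel u v x u' v' : f ** x = x -> x ** e = x ->
  u' ** u = f -> v ** v' = e -> x = u' ** (u ** (x ** v)) ** v'.
Proof. by move=> fx xe u'u vv'; rewrite !mulA u'u fx -(mulA _ v v') vv' xe. Qed.

Lemma biinvariant_AIrr : biinvariant mul e f (AIrr mul e f).
Proof.
move=> u v x Hu Hv /AIrrP [Hx Nx]; apply/AIrrP.
have [u' [fu _ u'u _]] := unitgrpP hf Hu.
have [v' [_ ve _ vv']] := unitgrpP he Hv.
have [fx xe] := (homP _ he hf).1 Hx.
split.
  by apply/(homP _ he hf); rewrite mulA fu -!mulA ve.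
case=> a [b [Na [Nb uxv]]]; apply: Nx.
exists (u' ** a ** one), (one ** b ** v').
do 2?split; try exact: nabla_pideal_mul.
by rewrite (unit_conj_cancel fx xe u'u vv') uxv mulm1 mul1m !mulA.
Qed.

Lemma biinvariant_Irr : biinvariant mul e f (Irr mul e f).
Proof.
move=> u v x Hu Hv /Irr_NullP [Hx Nx]; apply/Irr_NullP; split.
  exact: biinvariant_AIrr.
have [u' [_ _ u'u _]] := unitgrpP hf Hu.
have [v' [_ _ _ vv']] := unitgrpP he Hv.
have [fx xe] := (homP _ he hf).1 Hx.1.
case=> c uxv; apply: Nx; exists (v ** c ** u).
transitivity (u' ** (u ** (x ** v)) ** v'); first exact: unit_conj_cancel.
rewrite uxv !mulA u'u fx.
by rewrite -(mulA _ v v') vv' -(mulA _ x e) xe.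
Qed.

End KaroubiIrreducible.

Theorem mainTheorem17 (T : finType) (mul : T -> T -> T) (one : T)
  (mulA : associative mul) (mul1m : left_id one mul) (mulm1 : right_id one mul)
  (e f : T) (he : idem mul e) (hf : idem mul f) :
  let X := pideal mul e in
  let Y := pideal mul f in
  (forall m, AIrr mul e f m <->
      (hom mul e f m /\ ~ setmul mul (nabla mul Y) (nabla mul X) m)) /\
  (forall m, Irr mul e f m <-> Null mul (AIrr mul e f) m) /\
  biinvariant mul e f (AIrr mul e f) /\ (forall m, AIrr mul e f m -> hom mul e f m) /\
  biinvariant mul e f (Irr mul e f) /\ (forall m, Irr mul e f m -> hom mul e f m).
Proof.
move=> X Y; split; first exact: (AIrrP mulA mul1m mulm1 he hf).
split; first exact: (Irr_NullP mulA he hf).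
split; first exact: (biinvariant_AIrr mulA mul1m mulm1 he hf).
split; first by move=> m [].
split; first exact: (biinvariant_Irr mulA mul1m mulm1 he hf).
by move=> m [[]].
Qed.
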